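(* Let $f:(0,\infty)\to\mathbb{R}$ be a convex function with $f(1)=0$, and assume that the function $g:(0,\infty)\to\mathbb{R}$ defined by $g(t)=-t f(t)$ is also convex. Let $P$ and $Q$ be two probability distributions on a finite set $\mathcal{A}$ that are positive on $\mathcal{A}$. Then $$\min_{x\in\mathcal{A}}\frac{P(x)}{Q(x)}\cdot D_f(P\|Q)\;\le\; -D_g(P\|Q)-f\bigl(1+\chi^2(P,Q)\bigr)\;\le\;\max_{x\in\mathcal{A}}\frac{P(x)}{Q(x)}\cdot D_f(P\|Q).$$
   Context: For a function $h:(0,\infty)\to\mathbb{R}$ and positive probability distributions $P,Q$ on a finite set $\mathcal{A}$, $D_h(P\|Q)=\sum_{x\in\mathcal{A}}Q(x)\,h\!\left(\frac{P(x)}{Q(x)}\right)$ (the $h$-divergence). The chi-squared divergence is $\chi^2(P,Q)=\sum_{x\in\mathcal{A}}\frac{(P(x)-Q(x))^2}{Q(x)}=\sum_{x\in\mathcal{A}}\frac{P(x)^2}{Q(x)}-1$. *)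

From HB Require Import structures.
From mathcomp Require Import all_boot all_order all_algebra.
Set Implicit Arguments. Unset Strict Implicit. Unset Printing Implicit Defensive.
Import Order.TTheory GRing.Theory Num.Theory.
Local Open Scope ring_scope.

Definition convex_pos (R : realFieldType) (h : R -> R) : Prop :=
  forall x y t : R, 0 < x -> 0 < y -> 0 <= t -> t <= 1 ->
    h (t * x + (1 - t) * y) <= t * h x + (1 - t) * h y.

Definition hdiv (R : realFieldType) (T : finType) (h : R -> R) (P Q : T -> R) : R :=
  \sum_(x : T) Q x * h (P x / Q x).

Definition chi2 (R : realFieldType) (T : finType) (P Q : T -> R) : R :=
  \sum_(x : T) (P x - Q x) ^+ 2 / Q x.

Definition pos_distr (R : realFieldType) (T : finType) (P : T -> R) : Prop :=
  (forall x, 0 < P x) /\ \sum_(x : T) P x = 1.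

(* min / max over the (nonempty) finite set of the ratio P/Q; x0 is any
   element of T, used only as seed of the iterated min/max. *)
Definition min_ratio (R : realFieldType) (T : finType) (x0 : T) (P Q : T -> R) : R :=
  \big[Num.min/(P x0 / Q x0)]_(x : T) (P x / Q x).
Definition max_ratio (R : realFieldType) (T : finType) (x0 : T) (P Q : T -> R) : R :=
  \big[Num.max/(P x0 / Q x0)]_(x : T) (P x / Q x).

(** For positive weights [w] on points [x], the Jensen gap
    [J(w) = sum w f(x) - (sum w) f(sum w x / sum w)] of a convex [f] is
    nonnegative and superadditive in [w], hence monotone in [w].  With
    [x = P/Q] and [m Q <= P <= M Q] (where [m], [M] are the extreme ratios),
    [J(m Q) <= J(P) <= J(M Q)].  Since [f 1 = 0], [J(c Q) = c D_f(P||Q)],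
    while [J(P) = sum P f(P/Q) - f(sum P^2/Q) = - D_g(P||Q) - f(1 + chi^2)]. *)

From HB Require Import structures.
From mathcomp Require Import all_boot all_order all_algebra.
From mathcomp Require Import reals.
From mathcomp Require Import ring lra.
Import Order.TTheory GRing.Theory Num.Theory.
Set Implicit Arguments.
Unset Strict Implicit.
Unset Printing Implicit Defensive.
Local Open Scope ring_scope.

Section JensenGap.
Variables (R : realFieldType) (T : Type).
Implicit Types (w u x : T -> R) (s : seq T).

Lemma sum_weighted_eq0 w s (F : T -> R) : (forall i, 0 <= w i) ->
  \sum_(i <- s) w i = 0 -> \sum_(i <- s) w i * F i = 0.
Proof.
move=> w_ge0; elim: s => [|a s IHs]; first by rewrite !big_nil.
rewrite !big_cons => /eqP; rewrite paddr_eq0 ?sumr_ge0 //.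
by move=> /andP[/eqP -> /eqP /IHs ->]; rewrite mul0r add0r.
Qed.

Lemma sum_weighted_gt0 w x s : (forall i, 0 <= w i) -> (forall i, 0 < x i) ->
  0 < \sum_(i <- s) w i -> 0 < \sum_(i <- s) w i * x i.
Proof.
move=> w_ge0 x_gt0 W_gt0.
have wx_ge0 i : 0 <= w i * x i by rewrite mulr_ge0 // ltW.
rewrite lt_neqAle sumr_ge0 // andbT; apply/eqP => /esym wx0.
have := sum_weighted_eq0 (fun i => (x i)^-1) wx_ge0 wx0.
under eq_bigr => i _ do rewrite mulfK ?lt0r_neq0 //.
by move=> W0; rewrite W0 ltxx in W_gt0.
Qed.

Lemma sum_weighted_split w u (F : T -> R) s :
  \sum_(i <- s) (w i + u i) * F i
    = \sum_(i <- s) w i * F i + \sum_(i <- s) u i * F i.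
Proof. by rewrite -big_split; apply: eq_bigr => i _; rewrite mulrDl. Qed.

Variable f : R -> R.
Hypothesis f_convex : convex_pos f.

Lemma convex_pos_mean2 (a b x y : R) : 0 <= a -> 0 <= b -> 0 < a + b ->
  0 < x -> 0 < y ->
  (a + b) * f ((a * x + b * y) / (a + b)) <= a * f x + b * f y.
Proof.
move=> a_ge0 b_ge0 ab_gt0 x_gt0 y_gt0.
have ab_neq0 := lt0r_neq0 ab_gt0.
have t_ge0 : 0 <= a / (a + b) by rewrite divr_ge0 // ltW.
have t_le1 : a / (a + b) <= 1 by rewrite ler_pdivrMr // mul1r lerDl.
have := f_convex x_gt0 y_gt0 t_ge0 t_le1.
have -> : a / (a + b) * x + (1 - a / (a + b)) * y = (a * x + b * y) / (a + b)
  by field.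
move=> /(ler_wpM2l (ltW ab_gt0)).
have -> : (a + b) * (a / (a + b) * f x + (1 - a / (a + b)) * f y)
  = a * f x + b * f y by field.
by [].
Qed.

Definition jensen_gap w x s : R :=
  \sum_(i <- s) w i * f (x i)
  - (\sum_(i <- s) w i) * f ((\sum_(i <- s) w i * x i) / \sum_(i <- s) w i).

Lemma jensen_gap_superadditive w u x s :
  (forall i, 0 <= w i) -> (forall i, 0 <= u i) -> (forall i, 0 < x i) ->
  0 < \sum_(i <- s) w i -> 0 < \sum_(i <- s) u i ->
  jensen_gap w x s + jensen_gap u x s <= jensen_gap (fun i => w i + u i) x s.
Proof.
move=> w_ge0 u_ge0 x_gt0 W_gt0 U_gt0; rewrite /jensen_gap big_split /=.
have wx_gt0 := sum_weighted_gt0 w_ge0 x_gt0 W_gt0.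
have ux_gt0 := sum_weighted_gt0 u_ge0 x_gt0 U_gt0.
have := convex_pos_mean2 (ltW W_gt0) (ltW U_gt0) (addr_gt0 W_gt0 U_gt0)
  (divr_gt0 wx_gt0 W_gt0) (divr_gt0 ux_gt0 U_gt0).
rewrite ![_ * (_ / _)]mulrC !divfK ?lt0r_neq0 //.
rewrite !sum_weighted_split; lra.
Qed.

Lemma jensen_big w x s : (forall i, 0 <= w i) -> (forall i, 0 < x i) ->
  0 < \sum_(i <- s) w i ->
  (\sum_(i <- s) w i) * f ((\sum_(i <- s) w i * x i) / \sum_(i <- s) w i)
    <= \sum_(i <- s) w i * f (x i).
Proof.
move=> w_ge0 x_gt0; elim: s => [|a s IHs]; first by rewrite big_nil ltxx.
rewrite !big_cons => W_gt0.
have [W0 | Ws_neq0] := eqVneq (\sum_(i <- s) w i) 0.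
  rewrite W0 !sum_weighted_eq0 // !addr0 in W_gt0 *.
  by rewrite mulrAC divff ?mul1r // lt0r_neq0.
have Ws_gt0 : 0 < \sum_(i <- s) w i by rewrite lt0r Ws_neq0 sumr_ge0.
have wxs_gt0 := sum_weighted_gt0 w_ge0 x_gt0 Ws_gt0.
have := convex_pos_mean2 (w_ge0 a) (ltW Ws_gt0) W_gt0 (x_gt0 a)
  (divr_gt0 wxs_gt0 Ws_gt0).
rewrite [_ * (_ / _)]mulrC divfK ?lt0r_neq0 // => /le_trans; apply.
by rewrite lerD2l IHs.
Qed.

Lemma jensen_gap_ge0 w x s : (forall i, 0 <= w i) -> (forall i, 0 < x i) ->
  0 <= jensen_gap w x s.
Proof.
move=> w_ge0 x_gt0; rewrite /jensen_gap subr_ge0.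
have [W0 | W_neq0] := eqVneq (\sum_(i <- s) w i) 0.
  by rewrite W0 mul0r sum_weighted_eq0.
by rewrite jensen_big // lt0r W_neq0 sumr_ge0.
Qed.

Lemma eq_jensen_gap w u x s : w =1 u -> jensen_gap w x s = jensen_gap u x s.
Proof.
move=> eq_wu; have eq_sum (F : T -> R) :
  \sum_(i <- s) w i * F i = \sum_(i <- s) u i * F i.
  by apply: eq_bigr => i _; rewrite eq_wu.
rewrite /jensen_gap (eq_sum x) (eq_sum (f \o x)).
by rewrite (eq_bigr _ (fun i _ => eq_wu i)).
Qed.

Lemma jensen_gap_monotone w u x s :
  (forall i, 0 <= w i) -> (forall i, w i <= u i) -> (forall i, 0 < x i) ->
  0 < \sum_(i <- s) w i -> jensen_gap w x s <= jensen_gap u x s.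
Proof.
move=> w_ge0 w_le_u x_gt0 W_gt0.
have d_ge0 i : 0 <= u i - w i by rewrite subr_ge0.
have -> : jensen_gap u x s = jensen_gap (fun i => w i + (u i - w i)) x s.
  by apply: eq_jensen_gap => i; rewrite addrC subrK.
have [D0 | D_neq0] := eqVneq (\sum_(i <- s) (u i - w i)) 0.
  have D_null (F : T -> R) : \sum_(i <- s) (u i - w i) * F i = 0.
    exact: sum_weighted_eq0.
  rewrite /jensen_gap big_split /= D0 !addr0.
  by rewrite sum_weighted_split D_null sum_weighted_split D_null !addr0.
have D_gt0 : 0 < \sum_(i <- s) (u i - w i) by rewrite lt0r D_neq0 sumr_ge0.
apply: le_trans (jensen_gap_superadditive w_ge0 d_ge0 x_gt0 W_gt0 D_gt0).
by rewrite lerDl jensen_gap_ge0.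
Qed.

End JensenGap.

Section Divergences.
Variables (R : realFieldType) (T : finType).
Implicit Types (P Q : T -> R) (f : R -> R).

Lemma min_ratio_le x0 P Q x : min_ratio x0 P Q <= P x / Q x.
Proof. by rewrite /min_ratio (bigD1 x) //= ge_min lexx. Qed.

Lemma max_ratio_ge x0 P Q x : P x / Q x <= max_ratio x0 P Q.
Proof. by rewrite /max_ratio (bigD1 x) //= le_max lexx. Qed.

Lemma min_ratio_gt0 x0 P Q : (forall x, 0 < P x) -> (forall x, 0 < Q x) ->
  0 < min_ratio x0 P Q.
Proof.
move=> P_gt0 Q_gt0; rewrite /min_ratio.
apply: (big_ind (fun v => 0 < v)); first exact: divr_gt0.
  by move=> a b a_gt0 b_gt0; rewrite lt_min a_gt0 b_gt0.
by move=> x _; exact: divr_gt0.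
Qed.

Lemma hdiv_mulN f P Q : (forall x, Q x != 0) ->
  - hdiv (fun t => - (t * f t)) P Q = \sum_x P x * f (P x / Q x).
Proof.
move=> Q_neq0; rewrite /hdiv -sumrN; apply: eq_bigr => x _.
by rewrite mulrN opprK mulrA mulrCA divff ?mulr1.
Qed.

Lemma chi2_add1 P Q : pos_distr P -> pos_distr Q ->
  1 + chi2 P Q = \sum_x P x * (P x / Q x).
Proof.
move=> [_ P1] [Q_gt0 Q1]; rewrite /chi2.
have -> : \sum_x (P x - Q x) ^+ 2 / Q x
    = \sum_x (P x * (P x / Q x) - (2 * P x - Q x)).
  by apply: eq_bigr => x _; field; rewrite lt0r_neq0.
by rewrite sumrB big_split /= sumrN -mulr_sumr P1 Q1; ring.
Qed.

Lemma jensen_gap_distr f P Q : pos_distr P -> pos_distr Q ->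
  jensen_gap f P (fun x => P x / Q x) (index_enum T)
    = - hdiv (fun t => - (t * f t)) P Q - f (1 + chi2 P Q).
Proof.
move=> PP QP; have [_ P1] := PP; have [Q_gt0 _] := QP.
rewrite /jensen_gap hdiv_mulN ?chi2_add1 // => [|x]; last by rewrite lt0r_neq0.
by rewrite P1 mul1r divr1.
Qed.

Lemma jensen_gap_scaled f P Q c : f 1 = 0 -> c != 0 ->
  pos_distr P -> pos_distr Q ->
  jensen_gap f (fun x => c * Q x) (fun x => P x / Q x) (index_enum T)
    = c * hdiv f P Q.
Proof.
move=> f1 c_neq0 [_ P1] [Q_gt0 Q1].
have cQr_sum : \sum_x c * Q x * (P x / Q x) = c.
  rewrite -[RHS]mulr1 -P1 mulr_sumr; apply: eq_bigr => x _.
  by rewrite -mulrA [Q x * _]mulrC divfK ?lt0r_neq0.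
rewrite /jensen_gap cQr_sum -mulr_sumr Q1 mulr1 divff // f1 mulr0 subr0.
by rewrite /hdiv mulr_sumr; apply: eq_bigr => x _; rewrite mulrA.
Qed.

End Divergences.

Theorem proposition5 (R : realType) (T : finType) (x0 : T)
  (f : R -> R) (P Q : T -> R) :
  convex_pos f -> f 1 = 0 ->
  convex_pos (fun t => - (t * f t)) ->
  pos_distr P -> pos_distr Q ->
  min_ratio x0 P Q * hdiv f P Q
    <= - hdiv (fun t => - (t * f t)) P Q - f (1 + chi2 P Q)
  /\
  - hdiv (fun t => - (t * f t)) P Q - f (1 + chi2 P Q)
    <= max_ratio x0 P Q * hdiv f P Q.
Proof.
move=> f_convex f1 _ PP QP; have [P_gt0 P1] := PP; have [Q_gt0 Q1] := QP.
have ratio_gt0 x : 0 < P x / Q x by rewrite divr_gt0.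
have m_gt0 := min_ratio_gt0 x0 P_gt0 Q_gt0.
have M_gt0 := lt_le_trans (ratio_gt0 x0) (max_ratio_ge x0 P Q x0).
rewrite -!jensen_gap_scaled ?lt0r_neq0 // -jensen_gap_distr //.
split; apply: jensen_gap_monotone => //.
- by move=> x; rewrite mulr_ge0 ?ltW.
- by move=> x; rewrite -ler_pdivlMr // min_ratio_le.
- by rewrite -mulr_sumr Q1 mulr1.
- by move=> x; rewrite ltW.
- by move=> x; rewrite -ler_pdivrMr // max_ratio_ge.
- by rewrite P1.
Qed.
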